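(* Let $F$ be a field of characteristic zero and let $A$ be a $\#$-superalgebra over $F$. If $A$ is a PI-algebra, then there is a real number $\overline d$ such that $c_n^{grs}(A)\leq \overline d^{\,n}$ for every $n\geq1$.
   Context: All algebras are associative over $F$. A superalgebra is $A=A_0\oplus A_1$ with $A_iA_j\subseteq A_{(i+j)\bmod 2}$. A superinvolution is an $F$-linear map $\#:A\to A$ with $A_i^\#\subseteq A_i$, $(c^\#)^\#=c$, $(ab)^\#=(-1)^{\deg a\deg b}b^\#a^\#$ for homogeneous $a,b$; a graded involution is an $F$-linear map $\#$ with $A_i^\#\subseteq A_i$, $(c^\#)^\#=c$, $(ab)^\#=b^\#a^\#$. A $\#$-superalgebra is a superalgebra with one of these. $A_i^{\pm}=\{a\in A_i:a^\#=\pm a\}$. $A$ is a PI-algebra if it satisfies a nontrivial ordinary polynomial identity. Let $\mathcal F$ be the free non-unital associative algebra on variables $y_{i,j}$ (symmetric) and $z_{i,j}$ ($i\in\{0,1\}$, $j\ge1$, skew), with variables of index $i$ of $\mathbb Z_2$-degree $i$, equipped with the induced superinvolution or graded involution ($y^\#=y$, $z^\#=-z$). A $\#$-superidentity of $A$ is an element of $\mathcal F$ vanishing under all substitutions $y_{0,j}\mapsto A_0^+$, $z_{0,j}\mapsto A_0^-$, $y_{1,j}\mapsto A_1^+$, $z_{1,j}\mapsto A_1^-$; $Id_2^\#(A)$ denotes their set. $P_n^{grs}$ is the span of the monomials $w_{\sigma(1)}\cdots w_{\sigma(n)}$, $\sigma\in S_n$, $w_i\in\{y_{0,i},z_{0,i},y_{1,i},z_{1,i}\}$,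 and $c_n^{grs}(A)=\dim P_n^{grs}/(P_n^{grs}\cap Id_2^\#(A))$. *)

From HB Require Import structures.
From mathcomp Require Import all_boot all_order all_algebra all_fingroup.
From mathcomp Require Import boolp reals.
Set Implicit Arguments. Unset Strict Implicit. Unset Printing Implicit Defensive.
Import Order.TTheory GRing.Theory Num.Theory.
Local Open Scope ring_scope.

Section Defs.
Variables (F : fieldType) (A : lmodType F) (mul : A -> A -> A).

Definition is_assoc_algebra : Prop :=
  [/\ forall (a : F) (x y z : A), mul (a *: x + y) z = a *: mul x z + mul y z,
      forall (a : F) (x y z : A), mul z (a *: x + y) = a *: mul z x + mul z y
    & forall x y z : A, mul x (mul y z) = mul (mul x y) z].

(* Z_2-grading A = A_0 (+) A_1, given by gr false = A_0, gr true = A_1 *)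
Definition is_Z2_grading (gr : bool -> A -> Prop) : Prop :=
  [/\ forall i, gr i 0,
      forall i (a : F) (x y : A), gr i x -> gr i y -> gr i (a *: x + y),
      forall x : A, exists x0 x1, [/\ gr false x0, gr true x1 & x = x0 + x1],
      forall x : A, gr false x -> gr true x -> x = 0
    & forall i j (x y : A), gr i x -> gr j y -> gr (i (+) j) (mul x y)].

(* sharp is a superinvolution (super = true) or a graded involution
   (super = false) of the superalgebra (A, gr) *)
Definition is_sharp (gr : bool -> A -> Prop) (sharp : A -> A) (super : bool)
  : Prop :=
  [/\ forall (a : F) (x y : A), sharp (a *: x + y) = a *: sharp x + sharp y,
      forall i x, gr i x -> gr i (sharp x),
      forall x, sharp (sharp x) = x
    & forall i j (x y : A), gr i x -> gr j y ->
        sharp (mul x y) =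
        (if [&& super, i & j] then -1 else 1) *: mul (sharp y) (sharp x)].

Definition lprod (l : seq A) : A :=
  match l with [::] => 0 | a :: l' => foldl mul a l' end.

(* ordinary PI: a nonzero element of the free non-unital algebra F<x_0,x_1,...>,
   given as sum_{w in ws} c w * w over distinct nonempty words, vanishing on A *)
Definition is_PI : Prop :=
  exists (ws : seq (seq nat)) (c : seq nat -> F),
    [/\ uniq ws, all (fun w => w != [::]) ws, has (fun w => c w != 0) ws
      & forall phi : nat -> A,
          \sum_(w <- ws) c w *: lprod (map phi w) = 0].

(* variable kinds: (i, b) stands for y_{i,_} if b = false, z_{i,_} if b = true *)
Definition kind := (bool * bool)%type.

Definition kind_space (gr : bool -> A -> Prop) (sharp : A -> A) (k : kind)
  (x : A) : Prop :=
  gr k.1 x /\ sharp x = (if k.2 then - x else x).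

(* monomials w_{s(1)}...w_{s(n)} of P_n^grs: a permutation s and the kind of
   each variable index i (w_i in {y_{0,i}, z_{0,i}, y_{1,i}, z_{1,i}}) *)
Local Notation mon n := ({perm 'I_n} * {ffun 'I_n -> kind})%type.

(* elements of P_n^grs: coefficient vectors over the monomial basis *)
Local Notation Pn n := {ffun mon n -> F^o}.

Definition mon_eval n (sub : kind -> 'I_n -> A) (m : mon n) : A :=
  lprod [seq sub (m.2 (m.1 j)) (m.1 j) | j <- enum 'I_n].

Definition Pn_eval n (f : Pn n) (sub : kind -> 'I_n -> A) : A :=
  \sum_(m : mon n) f m *: mon_eval sub m.

Definition is_grs_identity (gr : bool -> A -> Prop) (sharp : A -> A) n
  (f : Pn n) : Prop :=
  forall sub : kind -> 'I_n -> A,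
    (forall k j, kind_space gr sharp k (sub k j)) -> Pn_eval f sub = 0.

Definition indep_mod_Id gr sharp n (k : nat) : Prop :=
  exists g : 'I_k -> Pn n, forall a : 'I_k -> F,
    is_grs_identity gr sharp (\sum_(i < k) a i *: g i) -> forall i, a i = 0.

(* c_n^grs(A) = dim P_n^grs / (P_n^grs \cap Id_2^#(A)), as the maximal size of
   a linearly independent family in the quotient (bounded by dim P_n^grs) *)
Definition cn_grs gr sharp (n : nat) : nat :=
  \max_(k < #|{: mon n}|.+1 | `[< indep_mod_Id gr sharp n k >]) k.

End Defs.

(* A PI-algebra satisfies a multilinear identity of some degree d whose
   coefficient at the identity permutation is nonzero: substitute for each
   variable x of a longest word v with nonzero coefficient the sum of new
   variables a_p over the positions p with v_p = x, and extract by
   inclusion-exclusion the part in which every a_p occurs (no assumption on the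
   characteristic is needed).  Applied to the blocks W X_1 ... X_d of a monomial
   x_{s(1)} ... x_{s(n)} whose blocks X_i start with the terms of a decreasing
   subsequence of length d, this identity rewrites the monomial as a combination
   of lexicographically smaller ones.  Hence modulo the identities of A every
   monomial is a combination of monomials indexed by permutations without
   decreasing subsequence of length d.  Such a permutation is determined by the
   heights (lengths of the longest decreasing chains ending there) of its
   positions and of its values, so there are at most d^(2n) of them.  As every
   variable of P_n^grs also has one of 4 kinds, c_n^grs(A) <= (4 d^2)^n. *)

From mathcomp Require Import all_boot all_order all_algebra all_fingroup.
From mathcomp Require Import boolp reals.
Import Order.TTheory GRing.Theory Num.Theory.

Set Implicit Arguments. Unset Strict Implicit. Unset Printing Implicit Defensive.
Local Open Scope ring_scope.

Section AssocAlgebra.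
Variables (F : fieldType) (A : lmodType F) (mul : A -> A -> A).
Hypothesis hA : is_assoc_algebra mul.

Lemma mulmA x y z : mul x (mul y z) = mul (mul x y) z.
Proof. by case: hA. Qed.

Lemma mulmDl z x y : mul (x + y) z = mul x z + mul y z.
Proof. by case: hA => hl _ _; have := hl 1 x y z; rewrite !scale1r. Qed.

Lemma mulmDr z x y : mul z (x + y) = mul z x + mul z y.
Proof. by case: hA => _ hr _; have := hr 1 x y z; rewrite !scale1r. Qed.

Lemma mul0m z : mul 0 z = 0.
Proof. by have := mulmDl z 0 0; rewrite addr0 -{1}[mul 0 z]addr0 => /addrI. Qed.

Lemma mulm0 z : mul z 0 = 0.
Proof. by have := mulmDr z 0 0; rewrite addr0 -{1}[mul z 0]addr0 => /addrI. Qed.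

Lemma mulmZl z a x : mul (a *: x) z = a *: mul x z.
Proof. by case: hA => hl _ _; have := hl a x 0 z; rewrite addr0 mul0m addr0. Qed.

Lemma mulmZr z a x : mul z (a *: x) = a *: mul z x.
Proof. by case: hA => _ hr _; have := hr a x 0 z; rewrite addr0 mulm0 addr0. Qed.

Lemma mulm_suml (I : Type) (r : seq I) (P : pred I) (G : I -> A) z :
  mul (\sum_(i <- r | P i) G i) z = \sum_(i <- r | P i) mul (G i) z.
Proof. by elim/big_rec2: _ => [|i y1 y2 _ <-]; rewrite ?mul0m ?mulmDl. Qed.

Lemma mulm_sumr (I : Type) (r : seq I) (P : pred I) (G : I -> A) z :
  mul z (\sum_(i <- r | P i) G i) = \sum_(i <- r | P i) mul z (G i).
Proof. by elim/big_rec2: _ => [|i y1 y2 _ <-]; rewrite ?mulm0 ?mulmDr. Qed.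

Lemma lprod_cons x l : l != [::] -> lprod mul (x :: l) = mul x (lprod mul l).
Proof.
case: l => [|y l] //= _; elim: l y => [|z l IH] y //=.
by rewrite -mulmA IH.
Qed.

Lemma lprod_cat l1 l2 : l1 != [::] -> l2 != [::] ->
  lprod mul (l1 ++ l2) = mul (lprod mul l1) (lprod mul l2).
Proof.
elim: l1 => [|x l1 IH] // _ ne2; have [->|ne1] := eqVneq l1 [::].
  by rewrite cat1s lprod_cons.
rewrite cat_cons !lprod_cons ?IH ?mulmA //.
by case: (l1) ne1.
Qed.

Lemma lprod_flatten (Ys : seq (seq A)) : Ys != [::] -> all (fun Y => Y != [::]) Ys ->
  lprod mul (flatten Ys) = lprod mul (map (lprod mul) Ys).
Proof.
elim: Ys => [|Y Ys IH] // _ /= /andP[neY neYs].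
have [->|ne] := eqVneq Ys [::]; first by rewrite /= cats0.
rewrite lprod_cat // ?IH -?lprod_cons //; first by case: (Ys) ne.
by case: Ys ne neYs {IH} => [|[|? ?] ?] //= _ /andP[].
Qed.

(* [lprod mul [::]] is 0, so left multiplication by the product of a possibly
   empty word needs a case split. *)
Definition premul (W : seq A) (y : A) : A :=
  if W is [::] then y else mul (lprod mul W) y.

Lemma lprod_cat_premul W l : l != [::] -> lprod mul (W ++ l) = premul W (lprod mul l).
Proof. by case: W => // w W nel; rewrite lprod_cat. Qed.

Lemma premul0 W : premul W 0 = 0.
Proof. by case: W => //= *; rewrite mulm0. Qed.

Lemma premul_sum W (I : Type) (r : seq I) (P : pred I) (C : I -> F) (y : I -> A) :
  premul W (\sum_(i <- r | P i) C i *: y i) = \sum_(i <- r | P i) C i *: premul W (y i).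
Proof.
by case: W => // w W; rewrite /= mulm_sumr; apply: eq_bigr => i _; rewrite mulmZr.
Qed.

End AssocAlgebra.

Fixpoint words (m k : nat) : seq (seq 'I_m) :=
  if k is k'.+1 then [seq p :: s | p <- index_enum 'I_m, s <- words m k']
  else [:: [::]].

Lemma mem_words m k s : (s \in words m k) = (size s == k).
Proof.
elim: k s => [|k IH] s /=; first by case: s.
apply/allpairsPdep/idP => [[p [t [_ tk ->]]]|]; first by rewrite /= eqSS -IH.
by case: s => [|p s] //=; rewrite eqSS -IH => ?; exists p, s; rewrite mem_index_enum.
Qed.

Lemma uniq_words m k : uniq (words m k).
Proof.
elim: k => [|k IH] //=; apply: allpairs_uniq_dep => //; first exact: index_enum_uniq.
by move=> [p1 s1] [p2 s2] _ _ /= [-> ->].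
Qed.

Lemma all2_andl (T1 T2 : Type) (P : T2 -> bool) (r : T1 -> T2 -> bool) w s :
  all2 (fun x p => P p && r x p) w s = all P s && all2 r w s.
Proof.
elim: w s => [|x w IH] [|p s] //=; first by rewrite andbF.
by rewrite IH andbACA.
Qed.

Lemma all2_eq_map (T1 : eqType) (T2 : Type) (f : T2 -> T1) w s :
  all2 (fun x p => f p == x) w s = (map f s == w).
Proof. by elim: w s => [|x w IH] [|p s] //=; rewrite IH eqseq_cons. Qed.

Lemma eq_setT_uniq d (s : seq 'I_d) : size s = d -> ([set p in s] == setT) = uniq s.
Proof.
move=> sd; rewrite eqEcard subsetT cardsT card_ord cardsE /=.
apply/idP/idP => [le_d|/card_uniqP ->]; last by rewrite sd.
by apply/card_uniqP/eqP; rewrite eqn_leq card_size sd le_d.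
Qed.

Lemma eq0_of_subset_sums (T : finType) (V : zmodType) (H : {set T} -> V) :
  (forall S : {set T}, \sum_(X : {set T} | X \subset S) H X = 0) ->
  forall X, H X = 0.
Proof.
move=> sumH0 X; elim: {X}_.+1 {-2}X (ltnSn #|X|) => // k IH X ltXk.
have := sumH0 X; rewrite (bigD1 X) //= big1 ?addr0 // => Y /andP[sYX neYX].
apply: IH; rewrite -ltnS (leq_trans _ ltXk) // ltnS proper_card //.
by rewrite properEneq neYX.
Qed.

Section Multilinearization.
Variables (F : fieldType) (A : lmodType F) (mul : A -> A -> A).
Hypothesis hA : is_assoc_algebra mul.

Lemma lprod_expand m (Q : nat -> 'I_m -> bool) (a : 'I_m -> A) (w : seq nat) :
  w != [::] ->
  lprod mul [seq \sum_(p : 'I_m) (Q x p)%:R *: a p | x <- w] =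
  \sum_(s <- words m (size w)) (all2 Q w s)%:R *: lprod mul (map a s).
Proof.
elim: w => [|x w IH] // _; rewrite [size _]/= big_allpairs_dep.
have [->|new] := eqVneq w [::].
  by apply: eq_bigr => p _; rewrite big_seq1 /= andbT.
rewrite (lprod_cons hA); last by case: (w) new.
rewrite IH // (mulm_suml hA); apply: eq_bigr => p _.
rewrite (mulmZl hA) (mulm_sumr hA) scaler_sumr big_seq [RHS]big_seq.
apply: eq_bigr => s; rewrite mem_words => /eqP ss.
rewrite (mulmZr hA) (lprod_cons hA); last by case: (s) ss; case: (w) new.
by rewrite scalerA -natrM mulnb.
Qed.

Definition multilinear_identity d (b : seq 'I_d -> F) : Prop :=
  forall a : 'I_d -> A,
    \sum_(s <- words d d | uniq s) b s *: lprod mul (map a s) = 0.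

Variables (ws : seq (seq nat)) (c : seq nat -> F) (v : seq nat).
Hypothesis ws_nonempty : all (fun w => w != [::]) ws.
Hypothesis ws_identity : forall phi : nat -> A,
  \sum_(w <- ws) c w *: lprod mul (map phi w) = 0.
Hypothesis v_max : forall w, w \in ws -> c w != 0 -> (size w <= size v)%N.

Local Notation d := (size v).
Let letter (p : 'I_d) : nat := nth 0%N v p.

Definition linearized_coef (s : seq 'I_d) : F :=
  \sum_(w <- ws) c w * (map letter s == w)%:R.

Variable a : 'I_d -> A.

(* The part of the identity evaluated at x |-> sum of the a p with p in S and
   v_p = x in which exactly the a p with p in T occur. *)
Definition linearized_part (T : {set 'I_d}) : A :=
  \sum_(w <- ws) c w *: \sum_(s <- words d (size w))
     (([set p in s] == T) && all2 (fun x p => letter p == x) w s)%:R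
       *: lprod mul (map a s).

Lemma sum_linearized_part (S : {set 'I_d}) :
  \sum_(T : {set 'I_d} | T \subset S) linearized_part T = 0.
Proof.
rewrite -[RHS](ws_identity (fun x => \sum_p ((p \in S) && (letter p == x))%:R *: a p)).
rewrite /linearized_part exchange_big big_seq [RHS]big_seq; apply: eq_bigr => w w_ws /=.
rewrite -scaler_sumr lprod_expand; last exact: (allP ws_nonempty).
congr (_ *: _); rewrite exchange_big; apply: eq_bigr => s _ /=.
rewrite -scaler_suml all2_andl; congr (_ *: _).
have -> : all (mem S) s = ([set p in s] \subset S).
  apply/allP/subsetP => sS p; first by rewrite inE; apply: sS.
  by move=> ps; apply: sS; rewrite inE.
have [sS|nsS] := boolP ([set p in s] \subset S).
  rewrite (bigD1 [set p in s]) //= eqxx big1 ?addr0 // => T /andP[_ neT].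
  by rewrite eq_sym (negbTE neT).
by rewrite big1 // => T TS; case: eqP nsS => // ->; rewrite TS.
Qed.

Lemma linearized_part_setT :
  linearized_part setT =
  \sum_(s <- words d d | uniq s) linearized_coef s *: lprod mul (map a s).
Proof.
rewrite /linearized_coef; under [RHS]eq_bigr do rewrite scaler_suml.
rewrite /linearized_part [RHS]exchange_big [LHS]big_seq [RHS]big_seq.
apply: eq_bigr => w w_ws /=; have [->|cw] := eqVneq (c w) 0.
  by rewrite scale0r big1 // => s _; rewrite mul0r scale0r.
have /orP[/eqP sw|ltw] : (size w == d) || (size w < d)%N by rewrite -leq_eqVlt v_max.
  rewrite sw scaler_sumr [RHS]big_mkcond; apply: eq_big_seq => s.
  rewrite mem_words => /eqP ss; rewrite eq_setT_uniq // all2_eq_map.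
  by case: (uniq s); rewrite ?scalerA ?mulr0 ?scale0r.
rewrite [RHS]big1_seq => [|s /andP[_]]; last first.
  rewrite mem_words => /eqP ss.
  case: eqP => [sw|_]; last by rewrite mulr0 scale0r.
  by move: ltw; rewrite -sw size_map ss ltnn.
rewrite big1_seq ?scaler0 // => s; rewrite mem_words => /andP[_ /eqP ss].
have : (#|[set p in s]| < d)%N by rewrite cardsE (leq_ltn_trans (card_size s)) // ss.
by case: eqP => [->|_]; rewrite ?cardsT ?card_ord ?ltnn // scale0r.
Qed.

Lemma linearized_coef_enum :
  uniq ws -> v \in ws -> linearized_coef (enum 'I_d) = c v.
Proof.
move=> uws v_ws; rewrite /linearized_coef.
have -> : map letter (enum 'I_d) = v.
  by rewrite (map_comp (nth 0%N v) val) val_enum_ord; apply: mkseq_nth.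
rewrite (bigD1_seq v) //= eqxx mulr1 big1 ?addr0 // => w.
by rewrite eq_sym => /negPf->; rewrite mulr0.
Qed.

End Multilinearization.

Lemma PI_multilinear_identity (F : fieldType) (A : lmodType F) (mul : A -> A -> A) :
  is_assoc_algebra mul -> is_PI mul ->
  exists d (b : seq 'I_d -> F),
    [/\ (0 < d)%N, b (enum 'I_d) != 0 & multilinear_identity mul b].
Proof.
move=> hA [ws [c [uws ws_nonempty /hasP[w0 w0_ws cw0] ws_identity]]].
pose top m := has (fun w => (c w != 0) && (size w == m)) ws.
have top_bounded m : top m -> (m <= \max_(w <- ws) size w)%N.
  by case/hasP=> w w_ws /andP[_ /eqP <-]; apply: leq_bigmax_seq.
have [|d /hasP[v v_ws /andP[cv /eqP vd]] d_max] := ex_maxnP _ top_bounded.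
  by exists (size w0); apply/hasP; exists w0; rewrite // cw0 /=.
have v_max w : w \in ws -> c w != 0 -> (size w <= size v)%N.
  by move=> w_ws cw; rewrite vd; apply: d_max; apply/hasP; exists w; rewrite ?cw /=.
exists (size v), (@linearized_coef _ ws c v); split.
- by rewrite lt0n size_eq0 (allP ws_nonempty).
- by rewrite linearized_coef_enum.
move=> a; rewrite -(linearized_part_setT mul v_max).
exact: (eq0_of_subset_sums (sum_linearized_part hA ws_nonempty ws_identity a)).
Qed.

Lemma ltxi_catl (disp : Order.disp_t) (T : orderType disp) (u s t : seq T) :
  (u ++ s < u ++ t :> seqlexi T)%O = (s < t :> seqlexi T)%O.
Proof. by elim: u => [|x u IH] //=; rewrite eqhead_ltxiE. Qed.

Lemma ltxi_flatten_reorder (disp : Order.disp_t) (T : orderType disp) (x0 : T)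
    (Xs : seq (seq T)) (sv : seq nat) k :
  all (fun X => X != [::]) Xs -> sorted >%O (map (head x0) Xs) ->
  size sv = size Xs -> (k < size Xs)%N -> (nth 0 sv k < size Xs)%N ->
  (forall j, (j < k)%N -> nth 0 sv j = j) -> (k < nth 0 sv k)%N ->
  (flatten (map (nth [::] Xs) sv) < flatten Xs :> seqlexi T)%O.
Proof.
move=> Xs_nonempty Xs_sorted ssv ltk ltsvk fixed_k k_moved.
set Zs := map (nth [::] Xs) sv; have sZs : size Zs = size Xs by rewrite size_map.
have -> : Zs = take k Xs ++ drop k Zs.
  rewrite -[LHS](cat_take_drop k); congr (_ ++ _).
  apply: (@eq_from_nth _ [::]) => [|i]; rewrite !size_take sZs ltk // => ltik.
  by rewrite !nth_take // (nth_map 0) ?fixed_k // ssv (ltn_trans ltik).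
rewrite -{2}(cat_take_drop k Xs) !flatten_cat ltxi_catl.
rewrite (drop_nth [::]) ?sZs // (drop_nth [::] ltk) (nth_map 0) ?ssv //=.
have := sorted_ltn_nth (rev_trans lt_trans) x0 Xs_sorted.
rewrite size_map => /(_ k (nth 0 sv k) ltk ltsvk k_moved); rewrite !(nth_map [::]) //.
have := allP Xs_nonempty _ (mem_nth [::] ltsvk).
have := allP Xs_nonempty _ (mem_nth [::] ltk).
case: (nth [::] Xs k) => [|y Y] //; case: (nth [::] Xs _) => [|z Z] //= _ _ ltzy.
by rewrite neqhead_ltxiE ?ltzy // lt_eqF.
Qed.

Lemma first_moved_index (sv : seq nat) m :
  uniq sv -> size sv = m -> all (gtn m) sv -> sv != iota 0 m ->
  exists k, [/\ (k < m)%N, forall j, (j < k)%N -> nth 0 sv j = j & (k < nth 0 sv k)%N].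
Proof.
move=> usv ssv ltsv sv_moved.
have ex_moved : exists k, (k < m)%N && (nth 0 sv k != k).
  case: (pickP (fun k : 'I_m => nth 0 sv k != k)) => [k moved|fixed].
    by exists k; rewrite ltn_ord.
  case/eqP: sv_moved; apply: (@eq_from_nth _ 0) => [|i]; rewrite ?size_iota // ssv.
  by move=> ltim; rewrite nth_iota // add0n; apply/eqP/negbFE/(fixed (Ordinal ltim)).
have [k /andP[ltkm moved] min_k] := ex_minnP ex_moved.
have fixed j : (j < k)%N -> nth 0 sv j = j.
  move=> ltjk; apply/eqP; have := min_k j.
  by rewrite (ltn_trans ltjk ltkm) leqNgt ltjk /=; case: eqP => // _ /(_ isT).
exists k; split=> //; rewrite ltn_neqAle eq_sym moved leqNgt /=.
apply/negP => lt_svk_k; have := fixed _ lt_svk_k.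
have lt_svk_m : (nth 0 sv k < m)%N by apply: (allP ltsv); rewrite mem_nth ?ssv.
move/eqP; rewrite nth_uniq ?ssv // => /eqP eq_svk_k.
by rewrite eq_svk_k ltnn in lt_svk_k.
Qed.

Lemma blocks_at (T : eqType) (x0 : T) (P : seq nat) (L : seq T) :
  P != [::] -> sorted ltn P -> all (gtn (size L)) P ->
  exists W Xs, [/\ L = W ++ flatten Xs, map (head x0) Xs = map (nth x0 L) P
                 & all (fun X => X != [::]) Xs].
Proof.
elim/last_ind: P L => [|P p IH] L // _ sPp; rewrite all_rcons => /andP[ltpL ltPL].
have drop_p : drop p L = nth x0 L p :: drop p.+1 L by rewrite (drop_nth x0).
have [->|neP] := eqVneq P [::].
  by exists (take p L), [:: drop p L]; rewrite /= cats0 cat_take_drop drop_p.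
have /and3P[/allrelP ltP pwP _] :
    [&& allrel ltn P [:: p], pairwise ltn P & pairwise ltn [:: p]].
  by rewrite -pairwise_cat cats1 -sorted_pairwise //; apply: ltn_trans.
have sP : sorted ltn P by rewrite sorted_pairwise //; apply: ltn_trans.
have ltPp x : x \in P -> (x < p)%N by move=> xP; apply: ltP; rewrite ?inE.
have [|W [Xs [eL heads nonempty]]] := IH (take p L) neP sP.
  by apply/allP => x xP; rewrite /= size_take (ltpL : (p < size L)%N) ltPp.
exists W, (rcons Xs (drop p L)); split.
- by rewrite flatten_rcons catA -eL cat_take_drop.
- rewrite !map_rcons heads drop_p; congr rcons.
  by apply/eq_in_map => x xP; rewrite nth_take // ltPp.
- by rewrite all_rcons nonempty drop_p.
Qed.

Lemma perm_enum_uniq d (t : seq 'I_d) : uniq t -> size t = d -> perm_eq t (enum 'I_d).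
Proof.
move=> ut st; apply: uniq_perm; rewrite ?enum_uniq //.
have [|//] := uniq_min_size ut (fun i _ => mem_enum _ i).
by rewrite size_enum_ord st.
Qed.

Lemma sorted_rcons_step (T : Type) (r : rel T) (s : seq T) x y :
  sorted r (rcons s x) -> r x y -> sorted r (rcons (rcons s x) y).
Proof.
case: s => [|z s] /=; first by move=> _ ->.
by move=> sx rxy; rewrite rcons_path sx last_rcons.
Qed.

Section PermutationWords.
Variable n : nat.

Definition word (s : 'S_n) : seq 'I_n := map s (enum 'I_n).

Lemma size_word s : size (word s) = n.
Proof. by rewrite size_map size_enum_ord. Qed.

Lemma nth_word s (x0 p : 'I_n) : nth x0 (word s) p = s p.
Proof. by rewrite (nth_map x0) ?size_enum_ord // nth_ord_enum. Qed.

Lemma perm_eq_word s : perm_eq (word s) (enum 'I_n).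
Proof.
rewrite -val_ord_tuple; apply/tuple_permP; exists s; rewrite /word /=.
by apply: eq_map => i; rewrite tnth_ord_tuple.
Qed.

Lemma word_surj (l : seq 'I_n) : perm_eq l (enum 'I_n) -> exists s, word s = l.
Proof.
rewrite -val_ord_tuple => /tuple_permP[s ->]; exists s; rewrite /word /=.
by apply: eq_map => i; rewrite tnth_ord_tuple.
Qed.

End PermutationWords.

Section PermutationSpan.
Variables (F : fieldType) (A : lmodType F) (mul : A -> A -> A) (n : nat).

Definition perm_value (x : 'I_n -> A) (s : 'S_n) : A := lprod mul (map x (word s)).

Definition spanned_by (P : pred 'S_n) (s : 'S_n) : Prop :=
  exists g : 'S_n -> F, (forall t, g t != 0 -> P t) /\
    forall x, perm_value x s = \sum_t g t *: perm_value x t.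

Lemma spanned_by_self (P : pred 'S_n) s : P s -> spanned_by P s.
Proof.
move=> Ps; exists (fun t => (t == s)%:R); split=> [t /=|x].
  by case: (t =P s) => [-> //|_]; rewrite eqxx.
rewrite (bigD1 s) //= eqxx scale1r big1 ?addr0 // => t /negPf->.
by rewrite scale0r.
Qed.

Lemma spanned_by_sum (I : eqType) (r : seq I) (R : pred I) (C : I -> F)
    (tau : I -> 'S_n) (P : pred 'S_n) s :
  {in r, forall i, R i -> C i != 0 -> P (tau i)} ->
  (forall x, perm_value x s = \sum_(i <- r | R i) C i *: perm_value x (tau i)) ->
  spanned_by P s.
Proof.
move=> Ptau expand; exists (fun t => \sum_(i <- r | R i && (tau i == t)) C i).
split=> [t|x].
  apply: contraNT => nPt; rewrite big_seq_cond big1 // => i.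
  case/and3P=> ir Ri /eqP taui; apply/eqP; apply: contraNT nPt.
  by rewrite -taui; apply: Ptau.
under [RHS]eq_bigr do rewrite scaler_suml.
rewrite -(exchange_big_dep xpredT) //= expand; apply: eq_bigr => i _.
by rewrite (big_pred1 (tau i)) // => t; rewrite eq_sym.
Qed.

Lemma spanned_by_trans (P Q : pred 'S_n) s :
  spanned_by P s -> (forall t, P t -> spanned_by Q t) -> spanned_by Q s.
Proof.
case=> g [gP expand] PQ.
have /choice[h hQ] : forall t, exists h : 'S_n -> F, P t ->
    (forall u, h u != 0 -> Q u) /\
    forall x, perm_value x t = \sum_u h u *: perm_value x u.
  by move=> t; have [/PQ[h]|_] := boolP (P t); [exists h | exists (fun=> 0)].
apply: (@spanned_by_sum _ (index_enum _) xpredT (fun tu => g tu.1 * h tu.1 tu.2) snd).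
  move=> [t u] _ _ /=; rewrite mulf_eq0 negb_or => /andP[gt0 htu0].
  exact: (hQ t (gP t gt0)).1 _ htu0.
move=> x; rewrite expand -(pair_bigA _ (fun t u => (g t * h t u) *: perm_value x u)).
apply: eq_bigr => t _.
have [->|gt0] := eqVneq (g t) 0.
  by rewrite scale0r big1 // => u _; rewrite mul0r scale0r.
rewrite (hQ t (gP t gt0)).2 scaler_sumr; apply: eq_bigr => u _.
by rewrite scalerA.
Qed.

End PermutationSpan.

Definition inv_rel n (s : 'S_n) : rel 'I_n := fun p q => (p < q)%N && (s q < s p)%N.

Definition bad_perm d n (s : 'S_n) : bool :=
  [exists P : d.-tuple 'I_n, sorted (inv_rel s) P].

Section Straightening.
Variables (F : fieldType) (A : lmodType F) (mul : A -> A -> A).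
Hypothesis hA : is_assoc_algebra mul.
Variables (d : nat) (b : seq 'I_d -> F).
Hypotheses (d_gt0 : (0 < d)%N) (b_enum : b (enum 'I_d) != 0).
Hypothesis b_identity : multilinear_identity mul b.
Variable n : nat.

Section Blocks.
Variables (s : 'S_n) (x0 : 'I_n) (W : seq 'I_n) (Xs : seq (seq 'I_n)).
Hypotheses (word_s : word s = W ++ flatten Xs) (size_Xs : size Xs = d).
Hypotheses (Xs_nonempty : all (fun X => X != [::]) Xs)
  (heads_sorted : sorted >%O (map (head x0) Xs)).

Definition reorder (t : seq 'I_d) : seq 'I_n :=
  W ++ flatten (map (nth [::] Xs) (map val t)).

Lemma reorder_enum : reorder (enum 'I_d) = word s.
Proof.
rewrite /reorder val_enum_ord word_s -size_Xs.
by congr (_ ++ flatten _); apply: mkseq_nth.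
Qed.

Lemma perm_eq_reorder t : uniq t -> size t = d -> perm_eq (reorder t) (enum 'I_n).
Proof.
move=> ut st; apply: perm_trans (perm_eq_word s).
rewrite -reorder_enum perm_cat2l; apply/perm_flatten/perm_map/perm_map.
exact: perm_enum_uniq.
Qed.

Lemma reorder_lt t : uniq t -> size t = d -> t != enum 'I_d ->
  (reorder t < word s :> seqlexi 'I_n)%O.
Proof.
move=> ut st t_moved; rewrite word_s ltxi_catl.
have u_sv : uniq (map val t) by rewrite map_inj_uniq //; apply: val_inj.
have s_sv : size (map val t) = d by rewrite size_map.
have lt_sv : all (gtn d) (map val t) by apply/allP => j /mapP[i _ ->]; apply: ltn_ord.
have sv_moved : map val t != iota 0 d.
  apply/eqP => eq_t; case/eqP: t_moved; apply: (inj_map val_inj).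
  by rewrite eq_t val_enum_ord.
have [k [ltkd fixed_k k_moved]] := first_moved_index u_sv s_sv lt_sv sv_moved.
apply: (ltxi_flatten_reorder _ heads_sorted _ _ _ fixed_k k_moved).
all: rewrite ?size_map ?size_Xs //.
by apply: (allP lt_sv); rewrite mem_nth ?s_sv.
Qed.

Definition block_value (x : 'I_n -> A) (i : 'I_d) : A :=
  lprod mul (map x (nth [::] Xs i)).

Lemma lprod_reorder x t : size t = d ->
  lprod mul (map x (reorder t)) =
  premul mul (map x W) (lprod mul (map (block_value x) t)).
Proof.
move=> st; have nonempty_block (i : 'I_d) : nth [::] Xs i != [::].
  by apply: (allP Xs_nonempty); rewrite mem_nth ?size_Xs.
have t_nonempty : t != [::] by case: t st => // st; move: d_gt0; rewrite -st.
rewrite map_cat map_flatten (lprod_cat_premul hA); last first.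
  by case: t st t_nonempty => // i t _ _ /=; move: (nonempty_block i); case: nth.
rewrite (lprod_flatten hA) -?map_comp //.
- by rewrite -size_eq0 size_map size_eq0.
- by apply/allP => _ /mapP[i _ ->] /=; move: (nonempty_block i); case: nth.
Qed.

(* The identity at the block products, multiplied on the left by the product of
   W and solved for its term at the identity permutation. *)
Lemma straighten_blocks x :
  perm_value mul x s = \sum_(t <- words d d | (t != enum 'I_d) && uniq t)
                         (- (b (enum 'I_d))^-1 * b t) *: lprod mul (map x (reorder t)).
Proof.
rewrite /perm_value; have := b_identity (block_value x).
move/(congr1 (premul mul (map x W))).
rewrite (premul0 hA) (premul_sum hA).
rewrite big_mkcond (bigD1_seq (enum 'I_d)) ?mem_words ?size_enum_ord ?uniq_words //=.
rewrite enum_uniq -big_mkcondr.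
rewrite -lprod_reorder ?size_enum_ord // reorder_enum => /eqP; rewrite addr_eq0 => /eqP.
move/(congr1 (fun y => (b (enum 'I_d))^-1 *: y)); rewrite scalerA mulVf // scale1r.
move=> ->; rewrite scalerN scaler_sumr -sumrN big_seq_cond [RHS]big_seq_cond.
apply: eq_bigr => t /andP[+ _]; rewrite mem_words => /eqP st.
by rewrite lprod_reorder // scalerA mulNr scaleNr.
Qed.

End Blocks.

Lemma straighten_bad s :
  bad_perm d s -> spanned_by mul (fun t => (word t < word s :> seqlexi 'I_n)%O) s.
Proof.
case/existsP=> P chain; pose x0 := tnth P (Ordinal d_gt0).
have sorted_pos : sorted ltn (map val P).
  by rewrite sorted_map; apply: sub_sorted chain => p q /andP[].
have pos_lt : all (gtn (size (word s))) (map val P).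
  by apply/allP => j /mapP[p _ ->]; rewrite /= size_word.
have P_nonempty : map val P != [::] by rewrite -size_eq0 size_map size_tuple -lt0n.
have [W [Xs [word_s heads Xs_nonempty]]] := blocks_at x0 P_nonempty sorted_pos pos_lt.
have heads_s : map (head x0) Xs = map s P.
  by rewrite heads -map_comp; apply: eq_map => p; rewrite /= nth_word.
have size_Xs : size Xs = d by rewrite -(size_map (head x0)) heads_s size_map size_tuple.
have heads_sorted : sorted >%O (map (head x0) Xs).
  by rewrite heads_s sorted_map; apply: sub_sorted chain => p q /andP[].
have /choice[tau tauE] : forall t : seq 'I_d, exists tau : 'S_n,
    uniq t && (size t == d) -> word tau = reorder W Xs t.
  move=> t; have [/andP[ut /eqP st]|_] := boolP (uniq t && (size t == d)).
    by have [tau <-] := word_surj (perm_eq_reorder word_s size_Xs ut st); exists tau.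
  by exists 1%g.
apply: (spanned_by_sum (r := words d d) (R := fun t => (t != enum 'I_d) && uniq t)
                       (tau := tau)).
  move=> t; rewrite mem_words => /eqP st /andP[t_moved ut] _.
  rewrite tauE; last by rewrite ut st eqxx.
  exact: (reorder_lt word_s size_Xs Xs_nonempty heads_sorted).
move=> x; rewrite (straighten_blocks word_s size_Xs Xs_nonempty).
rewrite big_seq_cond [RHS]big_seq_cond; apply: eq_bigr => t.
case/and3P; rewrite mem_words => /eqP st _ ut.
by rewrite /perm_value tauE ?ut ?st ?eqxx.
Qed.

Lemma spanned_by_good s : spanned_by mul (fun t : 'S_n => ~~ bad_perm d t) s.
Proof.
pose below s := [set t : 'S_n | (word t < word s :> seqlexi 'I_n)%O].
elim: {s}_.+1 {-2}s (ltnSn #|below s|) => // k IH s lt_below_k.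
have [bad_s|good_s] := boolP (bad_perm d s); last exact: spanned_by_self.
apply: spanned_by_trans (straighten_bad bad_s) _ => t lt_ts.
apply: IH; rewrite -ltnS (leq_trans _ lt_below_k) // ltnS; apply: proper_card.
apply/properP; split; last by exists t; rewrite !inE ?lt_ts ?ltxx.
by apply/subsetP => u; rewrite !inE => /lt_trans; apply.
Qed.

End Straightening.

Section GoodPermutations.
Variables (d n : nat).
Hypothesis d_gt0 : (0 < d)%N.

Definition chain_to (s : 'S_n) (p : 'I_n) (m : nat) : bool :=
  [exists P : m.-tuple 'I_n, sorted (inv_rel s) (rcons P p)].

Definition height (s : 'S_n) (p : 'I_n) : nat := \max_(m < d | chain_to s p m) m.

Lemma height_lt s p : (height s p < d)%N.
Proof.
rewrite /height; case: d d_gt0 => // d' _; rewrite ltnS.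
by apply/bigmax_leqP => m _; rewrite -ltnS.
Qed.

Lemma chain_to_height s p : chain_to s p (height s p).
Proof.
have : (0 < #|(fun m : 'I_d => chain_to s p m)|)%N.
  apply/card_gt0P; exists (Ordinal d_gt0).
  by rewrite unfold_in; apply/existsP; exists [tuple].
case/(eq_bigmax_cond (fun m : 'I_d => nat_of_ord m)) => m.
by rewrite /height unfold_in => + ->.
Qed.

Lemma height_inv_rel s p q :
  ~~ bad_perm d s -> inv_rel s p q -> (height s p < height s q)%N.
Proof.
move=> good_s pq; have /existsP[P chain_p] := chain_to_height s p.
have [lt_d|ge_d] := ltnP (height s p).+1 d.
  apply: (@leq_bigmax_cond _ (fun m : 'I_d => chain_to s q m) val (Ordinal lt_d)).
  by apply/existsP; exists (rcons_tuple P p); apply: sorted_rcons_step.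
have sz : size (rcons P p) == d by rewrite size_rcons size_tuple eqn_leq ge_d height_lt.
by case/negP: good_s; apply/existsP; exists (Tuple sz).
Qed.

Lemma heights_mono s t (p : 'I_n) : ~~ bad_perm d s ->
  (forall q, height s q = height t q) ->
  (forall x, height s (s^-1 x)%g = height t (t^-1 x)%g) ->
  (forall q : 'I_n, (q < p)%N -> s q = t q) -> (s p <= t p)%N.
Proof.
(* If t p < s p, the value t p sits in s at a later position q, so p q is an
   inversion of s although both positions get the same height. *)
move=> good_s eq_pos eq_val agree; rewrite leqNgt; apply/negP => lt_tp_sp.
pose q := (s^-1 (t p))%g; have sq : s q = t p by rewrite permKV.
have lt_pq : (p < q)%N.
  case: ltngtP => // [lt_qp|/val_inj eq_pq].
    move: (agree q lt_qp); rewrite sq => /perm_inj eq_pq.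
    by rewrite eq_pq ltnn in lt_qp.
  by rewrite -sq -eq_pq ltnn in lt_tp_sp.
have := height_inv_rel good_s (_ : inv_rel s p q); rewrite /inv_rel lt_pq sq lt_tp_sp.
by rewrite eq_val permK -eq_pos ltnn => /(_ isT).
Qed.

Definition heights (s : 'S_n) : {ffun 'I_n -> 'I_d} * {ffun 'I_n -> 'I_d} :=
  ([ffun p => Ordinal (height_lt s p)], [ffun x => Ordinal (height_lt s (s^-1 x)%g)]).

Lemma heights_inj : {in [pred s | ~~ bad_perm d s] &, injective heights}.
Proof.
move=> s t good_s good_t [/ffunP eq_pos /ffunP eq_val].
have {}eq_pos q : height s q = height t q.
  by have := congr1 val (eq_pos q); rewrite !ffunE.
have {}eq_val x : height s (s^-1 x)%g = height t (t^-1 x)%g.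
  by have := congr1 val (eq_val x); rewrite !ffunE.
suff agree k (p : 'I_n) : val p = k -> s p = t p by apply/permP => p; apply: agree.
elim/ltn_ind: k p => k IH p pk; have {}IH (q : 'I_n) : (q < p)%N -> s q = t q.
  by move=> lt_qp; apply: (IH q); rewrite -?pk.
apply/val_inj/eqP; rewrite eqn_leq heights_mono //=.
by apply: heights_mono => // q /IH.
Qed.

Lemma card_good_perm : (#|[set s : 'S_n | ~~ bad_perm d s]| <= d ^ n * d ^ n)%N.
Proof.
rewrite -(card_in_imset (f := heights)) => [|s t]; last first.
  by rewrite !inE; apply: heights_inj.
by apply: leq_trans (max_card _) _; rewrite card_prod !card_ffun !card_ord.
Qed.

End GoodPermutations.

Local Notation mon n := ({perm 'I_n} * {ffun 'I_n -> kind})%type.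

Section Codimension.
Variables (F : fieldType) (A : lmodType F) (mul : A -> A -> A).

Lemma mon_eval_perm_value n (sub : kind -> 'I_n -> A) s kappa :
  mon_eval mul sub (s, kappa) = perm_value mul (fun i => sub (kappa i) i) s.
Proof. by rewrite /perm_value /word -map_comp. Qed.

Lemma mon_eval_expand n (g : 'S_n -> F) s kappa :
  (forall x, perm_value mul x s = \sum_t g t *: perm_value mul x t) ->
  forall sub, mon_eval mul sub (s, kappa) =
    \sum_(t : mon n) (g t.1 * (t.2 == kappa)%:R) *: mon_eval mul sub t.
Proof.
move=> expand sub; rewrite mon_eval_perm_value expand.
rewrite -(pair_bigA _ (fun t kappa' =>
  (g t * (kappa' == kappa)%:R) *: mon_eval mul sub (t, kappa'))).
apply: eq_bigr => t _; rewrite (bigD1 kappa) //= eqxx mulr1 mon_eval_perm_value.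
by rewrite big1 ?addr0 // => kappa' /negPf->; rewrite mulr0 scale0r.
Qed.

Lemma cn_grs_le_card (gr : bool -> A -> Prop) (sharp : A -> A) n (G : {set mon n})
    (M : mon n -> mon n -> F) :
  (forall m t, t \notin G -> M m t = 0) ->
  (forall m sub, mon_eval mul sub m = \sum_t M m t *: mon_eval mul sub t) ->
  (cn_grs mul gr sharp n <= #|G|)%N.
Proof.
move=> M_supp M_span; apply/bigmax_leqP => k /asboolP[g g_indep].
pose proj (f : {ffun mon n -> F^o}) t := \sum_m f m * M m t.
have Pn_eval_proj f sub : Pn_eval mul f sub = \sum_t proj f t *: mon_eval mul sub t.
  rewrite /Pn_eval; under eq_bigr do rewrite M_span scaler_sumr.
  rewrite exchange_big; apply: eq_bigr => t _; rewrite scaler_suml.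
  by apply: eq_bigr => m _; rewrite scalerA.
have proj_sum (a : 'I_k -> F) t :
    proj (\sum_i a i *: g i) t = \sum_i a i * proj (g i) t.
  rewrite /proj; under eq_bigr do rewrite sum_ffunE mulr_suml.
  rewrite exchange_big; apply: eq_bigr => i _; rewrite mulr_sumr.
  by apply: eq_bigr => m _; rewrite ffunE mulrA.
pose Mat : 'M[F]_(k, #|G|) := \matrix_(i, j) proj (g i) (enum_val j).
have /eqP <- : row_free Mat; last exact: rank_leq_col.
apply: inj_row_free => v vMat0; apply/rowP => i; rewrite mxE.
apply: (g_indep (v 0)) => sub _; rewrite Pn_eval_proj big1 // => t _.
have [tG|tNG] := boolP (t \in G); last first.
  by rewrite /proj big1 ?scale0r // => m _; rewrite M_supp ?mulr0.
have -> : proj (\sum_j v 0 j *: g j) t = (v *m Mat) 0 (enum_rank_in tG t).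
  by rewrite proj_sum mxE; apply: eq_bigr => j _; rewrite mxE enum_rankK_in.
by rewrite vMat0 mxE scale0r.
Qed.

End Codimension.

Theorem corollary2p3 (R : realType) (F : fieldType) (hF : [pchar F] =i pred0)
  (A : lmodType F) (mul : A -> A -> A) (gr : bool -> A -> Prop)
  (sharp : A -> A) (super : bool) :
  is_assoc_algebra mul -> is_Z2_grading mul gr -> is_sharp mul gr sharp super ->
  is_PI mul ->
  exists d : R, forall n : nat, (1 <= n)%N ->
    ((cn_grs mul gr sharp n)%:R <= d ^+ n).
Proof.
move=> hA _ _ hPI.
have [d [b [d_gt0 b_enum b_identity]]] := PI_multilinear_identity hA hPI.
exists (4 * d ^ 2)%:R => n _; rewrite -natrX ler_nat.
have /choice[coef coefP] := spanned_by_good hA d_gt0 b_enum b_identity (n := n).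
pose good := [set s : 'S_n | ~~ bad_perm d s].
pose M (m t : mon n) := coef m.1 t.1 * (t.2 == m.2)%:R.
apply: leq_trans (@cn_grs_le_card _ _ _ gr sharp _ (setX good setT) M _ _) _.
- move=> [s kappa] [t kappa']; rewrite !inE andbT negbK /M /= => bad_t.
  by have [->|/(coefP s).1] := eqVneq (coef s t) 0; rewrite ?mul0r ?bad_t.
- by move=> [s kappa] sub; apply: mon_eval_expand; case: (coefP s).
rewrite cardsX cardsT card_ffun card_prod card_bool card_ord.
apply: leq_trans (leq_mul (card_good_perm n d_gt0) (leqnn _)) _.
by rewrite -!expnMn (_ : (d * d * (2 * 2) = 4 * d ^ 2)%N) // mulnC.
Qed.
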